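(* Let $R\subseteq S$ be an extension of commutative rings such that $S$ is well-centered on $R$. If $M$ is a maximal ideal of $R$ with $MS\neq S$, then $MS$ is a maximal ideal of $S$.
   Context: All rings are commutative with identity. An extension ring $S$ of $R$ is well-centered on $R$ if for each $s\in S$ there is a unit $u$ of $S$ with $us\in R$. *)

From HB Require Import structures.
From mathcomp Require Import all_boot all_order all_algebra.
Set Implicit Arguments. Unset Strict Implicit. Unset Printing Implicit Defensive.
Import GRing.Theory.
Local Open Scope ring_scope.

Definition is_subring (S : comPzRingType) (R : S -> Prop) : Prop :=
  [/\ R 1, (forall x y, R x -> R y -> R (x - y)) & (forall x y, R x -> R y -> R (x * y))].

Definition is_unit (S : comPzRingType) (u : S) : Prop := exists v : S, u * v = 1.

Definition well_centered (S : comPzRingType) (R : S -> Prop) : Prop :=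
  forall s : S, exists u : S, is_unit u /\ R (u * s).

Definition is_ideal (S : comPzRingType) (R I : S -> Prop) : Prop :=
  [/\ forall x, I x -> R x,
      I 0,
      (forall x y, I x -> I y -> I (x + y)) &
      (forall r x, R r -> I x -> I (r * x))].

Definition is_maximal_ideal (S : comPzRingType) (R I : S -> Prop) : Prop :=
  [/\ is_ideal R I,
      ~ I 1 &
      forall J : S -> Prop, is_ideal R J -> (forall x, I x -> J x) ->
        J 1 \/ (forall x, J x -> I x)].

Definition ext_ideal (S : comPzRingType) (M : S -> Prop) : S -> Prop :=
  fun x => exists (n : nat) (s m : 'I_n -> S),
    (forall i, M (m i)) /\ x = \sum_(i < n) s i * m i.

Definition whole (S : comPzRingType) : S -> Prop := fun _ => True.

From mathcomp Require Import all_boot all_order all_algebra.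
Set Implicit Arguments. Unset Strict Implicit. Unset Printing Implicit Defensive.
Import GRing.Theory.
Local Open Scope ring_scope.

(* If an ideal J of S contains MS, then J ∩ R is an ideal of R containing M,
   so by maximality of M either 1 ∈ J or J ∩ R = M.  In the second case every
   x ∈ J has a unit multiple u x lying in R, hence in J ∩ R = M, and therefore
   x = u^-1 (u x) ∈ MS. *)

Section Ideals.

Context {S : comPzRingType}.
Implicit Types (R M J : S -> Prop) (x y : S).

Lemma ext_ideal0 M : ext_ideal M 0.
Proof. by exists 0%N, (fun _ => 0), (fun _ => 0); split=> [[] | ]; rewrite ?big_ord0. Qed.

Lemma ext_idealD M x y : ext_ideal M x -> ext_ideal M y -> ext_ideal M (x + y).
Proof.
move=> [n1 [s1 [m1 [Mm1 ->]]]] [n2 [s2 [m2 [Mm2 ->]]]].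
exists (n1 + n2)%N, (fun i => match split i with inl j => s1 j | inr k => s2 k end),
  (fun i => match split i with inl j => m1 j | inr k => m2 k end).
split; first by move=> i; case: (split i).
rewrite big_split_ord; congr (_ + _); apply: eq_bigr => i _.
  by rewrite (unsplitK (inl i)).
by rewrite (unsplitK (inr i)).
Qed.

Lemma ext_idealMl M r x : ext_ideal M x -> ext_ideal M (r * x).
Proof.
move=> [n [s [m [Mm ->]]]]; exists n, (fun i => r * s i), m; split => //.
by rewrite mulr_sumr; apply: eq_bigr => i _; rewrite mulrA.
Qed.

Lemma ext_ideal_sub M x : M x -> ext_ideal M x.
Proof.
by move=> Mx; exists 1%N, (fun _ => 1), (fun _ => x); rewrite big_ord1 mul1r.
Qed.

Lemma is_ideal_ext_ideal M : is_ideal (@whole S) (ext_ideal M).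
Proof.
split=> //; [exact: ext_ideal0 | exact: ext_idealD | by move=> r x _; apply: ext_idealMl].
Qed.

Lemma ext_ideal1 M : ext_ideal M 1 -> forall x, ext_ideal M x.
Proof. by move=> M1 x; rewrite -(mulr1 x); apply: ext_idealMl. Qed.

Lemma subringD R x y : is_subring R -> R x -> R y -> R (x + y).
Proof.
move=> [R1 RB _] Rx Ry.
have R0 : R 0 by rewrite -(subrr 1); apply: RB.
by rewrite -[y]opprK -[- y]sub0r; apply/RB/RB.
Qed.

Lemma is_ideal_contraction R J :
  is_subring R -> is_ideal (@whole S) J -> is_ideal R (fun x => J x /\ R x).
Proof.
move=> subR [_ J0 JD JM]; have [R1 RB RM] := subR.
split=> [x [] // | | x y [Jx Rx] [Jy Ry] | r x Rr [Jx Rx]].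
- by split=> //; rewrite -(subrr 1); apply: RB.
- by split; [apply: JD | apply: subringD].
- by split; [apply: JM | apply: RM].
Qed.

Lemma well_centered_ideal_sub_ext R M J :
  well_centered R -> is_ideal (@whole S) J ->
  (forall x, J x -> R x -> M x) -> forall x, J x -> ext_ideal M x.
Proof.
move=> wcR [_ _ _ JM] JRM x Jx.
have [u [[v uv1] Rux]] := wcR x.
have -> : x = v * (u * x) by rewrite mulrA (mulrC v) uv1 mul1r.
by apply/ext_idealMl/ext_ideal_sub/JRM => //; apply: JM.
Qed.

End Ideals.

Theorem proposition3p2 (S : comPzRingType) (R : S -> Prop) (M : S -> Prop) :
  is_subring R -> well_centered R ->
  is_maximal_ideal R M ->
  ~ (forall x : S, ext_ideal M x) ->
  is_maximal_ideal (@whole S) (ext_ideal M).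
Proof.
move=> subR wcR [[MR _ _ _] _ Mmax] MS_proper.
split; [exact: is_ideal_ext_ideal | by move/ext_ideal1 | move=> J idJ MS_J].
have M_JR : forall x, M x -> J x /\ R x.
  by move=> x Mx; split; [apply/MS_J/ext_ideal_sub | apply: MR].
case: (Mmax _ (is_ideal_contraction subR idJ) M_JR) => [[J1 _] | JR_M]; [by left | right].
by apply: (well_centered_ideal_sub_ext wcR idJ) => x Jx Rx; apply: JR_M.
Qed.
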